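(* Let $\mathbf{C}=\mathbf{C}_1\,\dot\cup\,\mathbf{C}_2$ and $\mathbf{B}\in\dot{\mathbb{P}}(\mathbb{L}(\mathbf{C}_1))$ with $|\mathbf{B}|=|\mathbf{C}_1|$. Then $\mathbf{B}$ is singular for $\mathcal{D}(\mathbf{C},\Omega)$ if and only if there exists $\omega^*\in\Omega$ such that for all values $\mathbf{c}_2^*$ of $\mathbf{C}_2$ and all values $\mathbf{b}$ of the literals of $\mathbf{B}$: $D_{\mathbf{B}=\mathbf{b},\mathbf{C}_2=\mathbf{c}_2^*}(\omega^* )=1$ if and only if $\mathbf{b}=\mathbf{1}$. (Equivalently, $D_{\mathbf{c}}(\omega^* )=(\bigwedge(\mathbf{B}))_{\mathbf{c}}$ for all $\mathbf{c}$.)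
   Context: Events are binary random variables on a population $\Omega$; $\overline{X}=1-X$; $\mathbb{L}(\mathbf{C})=\mathbf{C}\cup\{\overline{X}:X\in\mathbf{C}\}$; $\dot{\mathbb{P}}(\mathbb{L}(\mathbf{C}))$ is the set of subsets of $\mathbb{L}(\mathbf{C})$ not containing both $X$ and $\overline{X}$; $(L)_{\mathbf{c}}$ is the value of literal $L$ under assignment $\mathbf{c}$; $\bigwedge(\mathbf{B})=\min_{L\in\mathbf{B}}L$. Potential outcomes $\mathcal{D}(\mathbf{C},\Omega)$: $D_{\mathbf{c}}(\omega)\in\{0,1\}$. Since $|\mathbf{B}|=|\mathbf{C}_1|$, values $\mathbf{b}$ for the literals of $\mathbf{B}$ determine an assignment to $\mathbf{C}_1$. $\mathbf{B}\subseteq\mathbb{L}(\mathbf{C})$ is a sufficient cause for $D$ relative to $\mathbf{C}$ for $\omega^*$ if some $\mathbf{c}^*$ has $(\bigwedge(\mathbf{B}))_{\mathbf{c}^*}=1$ and $D_{\mathbf{c}}(\omega^* )=1$ for every $\mathbf{c}$ with $(\bigwedge(\mathbf{B}))_{\mathbf{c}}=1$; it is minimal if no proper subset is a sufficient cause for $\omega^*$. A minimal sufficient cause $\mathbf{B}$ for $\omega^*$ is singular (relative to $\mathbf{C}$, for $\omega^*$) if there is no $\mathbf{B}'\in\dot{\mathbb{P}}(\mathbb{L}(\mathbf{C}))$, $\mathbf{B}'\neq\mathbf{B}$, that is also a minimal sufficient cause for $D$ relative to $\mathbf{C}$ for $\omega^*$. $\mathbf{B}$ is singular for $\mathcal{D}(\mathbf{C},\Omega)$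 if it is singular for some $\omega^*\in\Omega$. *)

From mathcomp Require Import all_boot.
Set Implicit Arguments. Unset Strict Implicit. Unset Printing Implicit Defensive.

(* The set of causes C is the finite type V of variables; an assignment c of
   values to C is a finite function V -> bool.  A literal is a pair (X, pol):
   (X, true) stands for X and (X, false) for its complement 1 - X. *)
Definition assign (V : finType) := {ffun V -> bool}.
Definition literal (V : finType) := (V * bool)%type.

Definition lit_val (V : finType) (L : literal V) (c : assign V) : bool :=
  if L.2 then c L.1 else ~~ c L.1.

Definition conj_val (V : finType) (B : {set literal V}) (c : assign V) : bool :=
  [forall L in B, lit_val L c].

(* B in P-dot(L(C)) : no variable appears with both polarities *)
Definition consistent (V : finType) (B : {set literal V}) : Prop :=
  forall X : V, ~ ((X, true) \in B /\ (X, false) \in B).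

Definition lits_over (V : finType) (C1 : {set V}) (B : {set literal V}) : Prop :=
  forall L, L \in B -> L.1 \in C1.

(* Potential outcomes D_c(omega) : D omega c *)
Definition sufficient_cause (V : finType) (Omega : Type)
  (D : Omega -> assign V -> bool) (B : {set literal V}) (w : Omega) : Prop :=
  (exists c, conj_val B c) /\ (forall c, conj_val B c -> D w c).

Definition minimal_sufficient_cause (V : finType) (Omega : Type)
  (D : Omega -> assign V -> bool) (B : {set literal V}) (w : Omega) : Prop :=
  sufficient_cause D B w /\
  (forall B' : {set literal V}, B' \proper B -> ~ sufficient_cause D B' w).

Definition singular_for (V : finType) (Omega : Type)
  (D : Omega -> assign V -> bool) (B : {set literal V}) (w : Omega) : Prop :=
  minimal_sufficient_cause D B w /\
  (forall B' : {set literal V}, consistent B' -> B' <> B -> ~ minimal_sufficient_cause D B' w).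

Definition singular (V : finType) (Omega : Type)
  (D : Omega -> assign V -> bool) (B : {set literal V}) : Prop :=
  exists w, singular_for D B w.

(* Write D_w for the potential-outcome function c |-> D w c.  The argument rests on
   two facts about conjunctions of literals:
   - if T is satisfiable and /\(T) implies /\(S), then S is a subset of T
     ([conj_implies_subset]); hence every sufficient cause for w contains
     all literals of any B with D_w <= /\(B);
   - for an assignment c, the set [lits_of c] of literals true at c is a
     consistent conjunction that holds only at c, so it is a sufficient cause
     whenever D w c = 1, and it contains a minimal one ([minimal_below]).
   The forward direction applies uniqueness to the minimal cause below
   [lits_of c]; the backward direction shows that B is below every
   sufficient cause, hence minimal, and that no other one can be minimal. *)
From mathcomp Require Import all_boot.

Set Implicit Arguments. Unset Strict Implicit. Unset Printing Implicit Defensive.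

Section Literals.
Variable V : finType.
Implicit Types (c : assign V) (L : literal V) (B S T : {set literal V}).

Lemma lit_valE L c : lit_val L c = (c L.1 == L.2).
Proof. by case: L => X [] /=; rewrite /lit_val /=; case: (c X). Qed.

Lemma conj_valP B c : reflect (forall L, L \in B -> lit_val L c) (conj_val B c).
Proof. exact: forall_inP. Qed.

(* A consistent conjunction is satisfiable: set X to true iff X occurs
   positively in B. *)
Lemma consistent_satisfiable B : consistent B -> exists c, conj_val B c.
Proof.
move=> consB; exists [ffun X => (X, true) \in B].
apply/conj_valP => -[X []] XB; rewrite /lit_val /= ffunE //.
by apply/negP => XB'; exact: (consB X).
Qed.

(* Implication between conjunctions of literals is inclusion, provided the
   stronger one is satisfiable: flipping a literal of S missing from T at a
   model of T would keep T true and make S false. *)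
Lemma conj_implies_subset S T :
  (exists c, conj_val T c) -> (forall c, conj_val T c -> conj_val S c) ->
  S \subset T.
Proof.
move=> [c0 /conj_valP T_c0] TS; apply/subsetP => -[X p] XpS.
apply/negPn/negP => XpT.
pose c : assign V := [ffun Y => if Y == X then ~~ p else c0 Y].
have T_c : conj_val T c.
  apply/conj_valP => -[Y q] YqT; rewrite lit_valE ffunE /=.
  case: (Y =P X) => [EYX | _]; last by have := T_c0 _ YqT; rewrite lit_valE.
  rewrite EYX in YqT; have ne_qp : q != p by apply: contraNneq XpT => <-.
  by case: (p) ne_qp; case: (q).
by move/conj_valP/(_ _ XpS): (TS c T_c); rewrite lit_valE ffunE eqxx; case: (p).
Qed.

Definition lits_of c : {set literal V} := [set L | lit_val L c].

Lemma conj_lits_of c c' : conj_val (lits_of c) c' = (c' == c).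
Proof.
apply/idP/eqP => [/conj_valP litsc | ->]; last by apply/conj_valP => L; rewrite inE.
apply/ffunP => X; have := litsc (X, c X).
by rewrite inE !lit_valE eqxx => /(_ isT) /eqP.
Qed.

Lemma consistent_sub_lits_of c S : S \subset lits_of c -> consistent S.
Proof.
move=> Sc X [/(subsetP Sc) XT /(subsetP Sc) XF].
by move: XT XF; rewrite !inE /lit_val /= => ->.
Qed.

End Literals.

Section Causes.
Variables (V : finType) (Omega : Type) (D : Omega -> assign V -> bool).
Variable w : Omega.
Implicit Types (c : assign V) (B S : {set literal V}).

(* Sufficiency only quantifies over the finitely many assignments, so it is
   decidable; this gives access to minimal sets via [minset]. *)
Definition sufficientb B : bool :=
  [exists c, conj_val B c] && [forall c, conj_val B c ==> D w c].

Lemma sufficientP B : reflect (sufficient_cause D B w) (sufficientb B).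
Proof.
apply: (iffP andP) => [[/existsP satB /forallP suffB] | [satB suffB]].
  by split=> // c; apply/implyP.
by split; [apply/existsP | apply/forallP => c; apply/implyP/suffB].
Qed.

Lemma minimal_below S :
  sufficient_cause D S w ->
  exists2 S' : {set literal V}, S' \subset S & minimal_sufficient_cause D S' w.
Proof.
move/sufficientP=> suffS.
have [S' /minsetP[suffS' minS'] S'S] := minset_exists suffS.
exists S' => //; split; first exact/sufficientP.
move=> B ltBS' /sufficientP suffB.
have eqBS' := minS' B suffB (proper_sub ltBS').
by rewrite eqBS' properxx in ltBS'.
Qed.

Lemma lits_of_sufficient c : D w c -> sufficient_cause D (lits_of c) w.
Proof.
move=> Dc; split; first by exists c; rewrite conj_lits_of.
by move=> c'; rewrite conj_lits_of => /eqP ->.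
Qed.

Lemma sufficient_superset B B' :
  (forall c, D w c -> conj_val B c) -> sufficient_cause D B' w -> B \subset B'.
Proof. by move=> DB [satB' suffB']; apply: conj_implies_subset satB' _ => c /suffB'/DB. Qed.

Lemma singular_for_agrees B :
  singular_for D B w -> forall c, D w c = conj_val B c.
Proof.
move=> [[[_ suffB] _] uniqB] c; apply/idP/idP => [Dc | /suffB //].
have [S SC minS] := minimal_below (lits_of_sufficient Dc).
have [eqSB | neSB] := eqVneq S B.
  by apply/conj_valP => L; rewrite -eqSB => /(subsetP SC); rewrite inE.
by case: (uniqB S (consistent_sub_lits_of SC)); first exact/eqP.
Qed.

Lemma agrees_singular_for B :
  consistent B -> (forall c, D w c = conj_val B c) -> singular_for D B w.
Proof.
move=> consB DB.
have suffB : sufficient_cause D B w.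
  by split; [exact: consistent_satisfiable | move=> c; rewrite DB].
have leB B' : sufficient_cause D B' w -> B \subset B'.
  by apply: sufficient_superset => c; rewrite DB.
split; first split=> // [B' ltB'B /leB leBB'].
  by rewrite properE leBB' andbF in ltB'B.
move=> B' _ neB'B [[satB' suffB'] minB']; apply: (minB' B) suffB.
by rewrite properEneq (leB B' (conj satB' suffB')) andbT eq_sym; apply/eqP.
Qed.

End Causes.

Theorem mainTheorem12 (V : finType) (Omega : Type)
  (D : Omega -> assign V -> bool) (C1 : {set V}) (B : {set literal V}) :
  consistent B -> lits_over C1 B -> #|B| = #|C1| ->
  (singular D B <->
   exists w : Omega, forall c : assign V,
     D w c = true <-> (forall L, L \in B -> lit_val L c = true)).
Proof.
move=> consB _ _; split=> [[w singB] | [w DB]]; exists w.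
  by move=> c; rewrite (singular_for_agrees singB c); split=> /conj_valP.
apply: agrees_singular_for consB _ => c.
by apply/idP/idP => [/(DB c)/conj_valP | /conj_valP/(DB c)].
Qed.
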